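(* For all $n\ge 2$, $HT_n=\ker(\varphi_{HT})$ is isomorphic to $HL_n=\ker(\psi_H)$.
   Context: For $n\ge 2$, the twisted virtual braid group $TVB_n$ is the group with generators $\sigma_1,\dots,\sigma_{n-1}$, $\rho_1,\dots,\rho_{n-1}$, $\gamma_1,\dots,\gamma_n$ and defining relations: $\sigma_i\sigma_{i+1}\sigma_i=\sigma_{i+1}\sigma_i\sigma_{i+1}$ ($1\le i\le n-2$); $\sigma_i\sigma_j=\sigma_j\sigma_i$ ($|i-j|\ge 2$); $\rho_i^2=1$; $\rho_i\rho_j=\rho_j\rho_i$ ($|i-j|\ge2$); $\rho_i\rho_{i+1}\rho_i=\rho_{i+1}\rho_i\rho_{i+1}$ ($1\le i\le n-2$); $\sigma_i\rho_j=\rho_j\sigma_i$ ($|i-j|\ge 2$); $\rho_i\rho_{i+1}\sigma_i=\sigma_{i+1}\rho_i\rho_{i+1}$ ($1\le i\le n-2$); $\gamma_i^2=1$ and $\gamma_i\gamma_j=\gamma_j\gamma_i$ (all $i,j$); $\gamma_j\rho_i=\rho_i\gamma_j$ and $\gamma_j\sigma_i=\sigma_i\gamma_j$ for $j\notin\{i,i+1\}$; $\rho_i\gamma_i=\gamma_{i+1}\rho_i$ ($1\le i\le n-1$); $\rho_i\sigma_i\rho_i=\gamma_{i+1}\gamma_i\sigma_i\gamma_i\gamma_{i+1}$ ($1\le i\le n-1$). $TVH_n$ is the kernel of $\varphi_H:TVB_n\to S_n$, $\sigma_i\mapsto e$, $\rho_i\mapsto(i,i+1)$, $\gamma_j\mapsto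 e$. In $TVB_n$ define $x_{i,i+1}=\sigma_i$, $x_{i+1,i}=\rho_i\sigma_i\rho_i$ ($1\le i\le n-1$), and for $1\le i<j-1\le n-1$: $x_{ij}=\rho_{j-1}\cdots\rho_{i+1}\sigma_i\rho_{i+1}\cdots\rho_{j-1}$, $x_{ji}=\rho_{j-1}\cdots\rho_{i+1}\rho_i\sigma_i\rho_i\rho_{i+1}\cdots\rho_{j-1}$; these together with the $\gamma_j$ generate $TVH_n$. $A_n=\langle\gamma_1,\dots,\gamma_n\rangle$; $\psi_H:TVH_n\to A_n$ is the homomorphism with $x_{kl}\mapsto e$, $\gamma_j\mapsto\gamma_j$; $HL_n=\ker\psi_H$. $TS_n=\langle\rho_1,\dots,\rho_{n-1},\gamma_1,\dots,\gamma_n\rangle\le TVB_n$, and $\varphi_{HT}:TVB_n\to TS_n$ is the homomorphism $\sigma_i\mapsto e$, $\rho_i\mapsto\rho_i$, $\gamma_j\mapsto\gamma_j$; $HT_n=\ker\varphi_{HT}$. *)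

(* Groups given by presentations are modelled by words over
   the generators, modulo the congruence generated by free cancellation and
   the defining relations.  Indices are 1-based as in the paper. *)
From Stdlib Require Import List Arith.
Import ListNotations.

Inductive gen : Type :=
| Sg : nat -> gen
| Rh : nat -> gen
| Ga : nat -> gen.

(* a letter: generator together with an exponent sign (true = inverse) *)
Definition letter := (gen * bool)%type.
Definition word := list letter.

Definition s (i : nat) : word := [(Sg i, false)].
Definition r (i : nat) : word := [(Rh i, false)].
Definition g (j : nat) : word := [(Ga j, false)].

Definition flip (x : letter) : letter := (fst x, negb (snd x)).

Definition valid_gen (n : nat) (x : gen) : Prop :=
  match x with
  | Sg i => 1 <= i <= n - 1
  | Rh i => 1 <= i <= n - 1
  | Ga j => 1 <= j <= n
  end.

Definition wf (n : nat) (w : word) : Prop := Forall (fun x => valid_gen n (fst x)) w.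

Definition far (i j : nat) : Prop := i + 2 <= j \/ j + 2 <= i.

Inductive rel (n : nat) : word -> word -> Prop :=
| R_sbraid i : 1 <= i <= n - 2 ->
    rel n (s i ++ s (i+1) ++ s i) (s (i+1) ++ s i ++ s (i+1))
| R_scomm i j : 1 <= i <= n - 1 -> 1 <= j <= n - 1 -> far i j ->
    rel n (s i ++ s j) (s j ++ s i)
| R_rsq i : 1 <= i <= n - 1 -> rel n (r i ++ r i) []
| R_rcomm i j : 1 <= i <= n - 1 -> 1 <= j <= n - 1 -> far i j ->
    rel n (r i ++ r j) (r j ++ r i)
| R_rbraid i : 1 <= i <= n - 2 ->
    rel n (r i ++ r (i+1) ++ r i) (r (i+1) ++ r i ++ r (i+1))
| R_srcomm i j : 1 <= i <= n - 1 -> 1 <= j <= n - 1 -> far i j ->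
    rel n (s i ++ r j) (r j ++ s i)
| R_mixed i : 1 <= i <= n - 2 ->
    rel n (r i ++ r (i+1) ++ s i) (s (i+1) ++ r i ++ r (i+1))
| R_gsq j : 1 <= j <= n -> rel n (g j ++ g j) []
| R_gcomm i j : 1 <= i <= n -> 1 <= j <= n -> rel n (g i ++ g j) (g j ++ g i)
| R_grcomm i j : 1 <= i <= n - 1 -> 1 <= j <= n -> j <> i -> j <> i + 1 ->
    rel n (g j ++ r i) (r i ++ g j)
| R_gscomm i j : 1 <= i <= n - 1 -> 1 <= j <= n -> j <> i -> j <> i + 1 ->
    rel n (g j ++ s i) (s i ++ g j)
| R_rg i : 1 <= i <= n - 1 -> rel n (r i ++ g i) (g (i+1) ++ r i)
| R_rsr i : 1 <= i <= n - 1 ->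
    rel n (r i ++ s i ++ r i) (g (i+1) ++ g i ++ s i ++ g i ++ g (i+1)).

Inductive eqv (n : nat) : word -> word -> Prop :=
| E_refl w : eqv n w w
| E_sym w w' : eqv n w w' -> eqv n w' w
| E_trans w1 w2 w3 : eqv n w1 w2 -> eqv n w2 w3 -> eqv n w1 w3
| E_ctx u v w w' : eqv n w w' -> eqv n (u ++ w ++ v) (u ++ w' ++ v)
| E_free x : eqv n [x; flip x] []
| E_rel l r : rel n l r -> eqv n l r.

Definition swap (i k : nat) : nat :=
  if Nat.eqb k i then i + 1 else if Nat.eqb k (i + 1) then i else k.

Definition act (x : letter) (k : nat) : nat :=
  match fst x with Rh i => swap i k | _ => k end.

Definition permOf (w : word) : nat -> nat :=
  fold_right (fun x f => fun k => act x (f k)) (fun k => k) w.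

Definition TVH (n : nat) (w : word) : Prop :=
  wf n w /\ forall k, 1 <= k <= n -> permOf w k = k.

(* phi_HT : TVB_n -> TS_n <= TVB_n  (sigma_i |-> e); HT_n its kernel *)
Definition is_sigma (x : letter) : bool :=
  match fst x with Sg _ => true | _ => false end.

Definition phiHT (w : word) : word := filter (fun x => negb (is_sigma x)) w.

Definition HT (n : nat) (w : word) : Prop := wf n w /\ eqv n (phiHT w) [].

Definition rup (a b : nat) : word := map (fun k => (Rh k, false)) (seq a (b - a)).

(* x_{ij} for i < j :  rho_{j-1}...rho_{i+1} sigma_i rho_{i+1}...rho_{j-1} *)
Definition x_up (i j : nat) : word := rev (rup (i+1) j) ++ s i ++ rup (i+1) j.
(* x_{ji} for i < j :  rho_{j-1}...rho_i sigma_i rho_i...rho_{j-1} *)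
Definition x_down (i j : nat) : word := rev (rup i j) ++ s i ++ rup i j.

Definition is_gamma (x : letter) : Prop := match fst x with Ga _ => True | _ => False end.
Definition A (n : nat) (w : word) : Prop :=
  exists v, wf n v /\ Forall is_gamma v /\ eqv n w v.

Definition is_psiH (n : nat) (psi : word -> word) : Prop :=
  (forall w w', TVH n w -> TVH n w' -> eqv n w w' -> eqv n (psi w) (psi w')) /\
  (forall w w', TVH n w -> TVH n w' -> eqv n (psi (w ++ w')) (psi w ++ psi w')) /\
  (forall w, TVH n w -> A n (psi w)) /\
  (forall i j, 1 <= i -> i < j -> j <= n ->
     eqv n (psi (x_up i j)) [] /\ eqv n (psi (x_down i j)) []) /\
  (forall j, 1 <= j <= n -> eqv n (psi (g j)) (g j)).

Definition HL (n : nat) (psi : word -> word) (w : word) : Prop :=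
  TVH n w /\ eqv n (psi w) [].

Definition subgroup_iso (n : nat) (H K : word -> Prop) : Prop :=
  exists f : word -> word,
    (forall w, H w -> K (f w)) /\
    (forall w w', H w -> H w' -> eqv n w w' -> eqv n (f w) (f w')) /\
    (forall w w', H w -> H w' -> eqv n (f (w ++ w')) (f w ++ f w')) /\
    (forall w w', H w -> H w' -> eqv n (f w) (f w') -> eqv n w w') /\
    (forall v, K v -> exists w, H w /\ eqv n (f w) v).

(* The identity map works: [HT_n] and [HL_n] are the same subgroup.  Every word [w] factors as
   [z . phiHT w], where [z] is a product of conjugates [q sigma_i^(+-1) q^-1] by sigma-free words
   [q].  Conjugating an [x_kl] by [rho_m] gives [x_(tau k, tau l)], so each such conjugate is a
   gamma-conjugate of some [x_kl] and lies in [HL_n]; hence [psi w = psi (phiHT w)] on [TVH_n].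
   A sigma-free word with trivial permutation is a word in the gammas (normal form
   [gammas . rhos] plus the Coxeter presentation of [S_n]), on which [psi] is the identity, so
   [psi w] is trivial exactly when [phiHT w] is. *)

From Stdlib Require Import List Arith Lia Setoid Morphisms.
Import ListNotations.

Definition rho (m : nat) : letter := (Rh m, false).
Definition sigma (m : nat) : letter := (Sg m, false).
Definition gamma (m : nat) : letter := (Ga m, false).

Definition inv (w : word) : word := rev (map flip w).

Lemma inv_app u v : inv (u ++ v) = inv v ++ inv u.
Proof. unfold inv. rewrite map_app, rev_app_distr. reflexivity. Qed.

Lemma flip_involutive x : flip (flip x) = x.
Proof. destruct x as [a b]. unfold flip. simpl. rewrite Bool.negb_involutive. reflexivity. Qed.

Lemma inv_involutive w : inv (inv w) = w.
Proof.
  unfold inv. rewrite map_rev, rev_involutive, map_map.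
  rewrite (map_ext _ (fun x => x)) by apply flip_involutive. apply map_id.
Qed.

Definition asc (a b : nat) : list nat := seq a (b - a).
Definition desc (a b : nat) : list nat := rev (asc a b).

Lemma asc_cons a b : a < b -> asc a b = a :: asc (a + 1) b.
Proof.
  intro Hab. unfold asc. replace (b - a) with (S (b - (a + 1))) by lia.
  simpl. rewrite Nat.add_1_r. reflexivity.
Qed.

Lemma asc_snoc a b : a <= b -> asc a (b + 1) = asc a b ++ [b].
Proof.
  intro Hab. unfold asc. replace (b + 1 - a) with (S (b - a)) by lia.
  rewrite seq_S. do 3 f_equal. lia.
Qed.

Lemma desc_snoc a b : a < b -> desc a b = desc (a + 1) b ++ [a].
Proof. intro Hab. unfold desc. rewrite asc_cons by exact Hab. reflexivity. Qed.

Lemma desc_cons a b : a <= b -> desc a (b + 1) = b :: desc a b.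
Proof. intro Hab. unfold desc. rewrite asc_snoc, rev_app_distr by exact Hab. reflexivity. Qed.

Lemma asc_nil a : asc a a = [].
Proof. unfold asc. rewrite Nat.sub_diag. reflexivity. Qed.

Lemma desc_nil a : desc a a = [].
Proof. unfold desc. rewrite asc_nil. reflexivity. Qed.

Lemma in_asc a b k : In k (asc a b) -> a <= k < b.
Proof. unfold asc. rewrite in_seq. lia. Qed.

Lemma in_desc a b k : In k (desc a b) -> a <= k < b.
Proof. unfold desc. rewrite <- in_rev. apply in_asc. Qed.

Ltac swap_cases :=
  unfold swap; repeat (match goal with |- context [Nat.eqb ?a ?b] =>
    lazymatch a with context [if _ then _ else _] => fail | _ =>
    lazymatch b with context [if _ then _ else _] => fail | _ =>
      destruct (Nat.eqb_spec a b) end end end; cbn iota); lia.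

Lemma swap_involutive i k : swap i (swap i k) = k.
Proof. swap_cases. Qed.

Lemma map_swap_involutive i l : map (swap i) (map (swap i) l) = l.
Proof. rewrite map_map, (map_ext _ (fun k => k)) by apply swap_involutive. apply map_id. Qed.

Lemma swap_comm i j k : far i j -> swap i (swap j k) = swap j (swap i k).
Proof. unfold far. swap_cases. Qed.

Lemma swap_braid i k :
  swap i (swap (i + 1) (swap i k)) = swap (i + 1) (swap i (swap (i + 1) k)).
Proof. swap_cases. Qed.

Lemma swap_range n m j : 1 <= m <= n - 1 -> 1 <= j <= n -> 1 <= swap m j <= n.
Proof. swap_cases. Qed.

Lemma permOf_app u v k : permOf (u ++ v) k = permOf u (permOf v k).
Proof. induction u as [|a u IH]; simpl; [reflexivity|]. rewrite IH. reflexivity. Qed.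

Lemma permOf_gammas l k : permOf (map gamma l) k = k.
Proof. induction l; simpl; auto. Qed.

Lemma permOf_rhos_rev l k : permOf (map rho (rev l)) (permOf (map rho l) k) = k.
Proof.
  induction l as [|a l IH]; simpl; [reflexivity|].
  rewrite map_app, permOf_app. simpl. unfold act. simpl. rewrite swap_involutive. apply IH.
Qed.

Lemma permOf_rhos_fix l k : (forall i, In i l -> k <> i /\ k <> i + 1) ->
  permOf (map rho l) k = k.
Proof.
  induction l as [|i l IH]; intros Hl; simpl; [reflexivity|].
  rewrite IH by (intros; apply Hl; right; auto). unfold act. simpl.
  destruct (Hl i (or_introl eq_refl)). swap_cases.
Qed.

Lemma permOf_rhos_desc k m : k <= m -> permOf (map rho (desc k m)) k = m.
Proof.
  intro Hkm. induction m as [|m IH]; [replace k with 0 by lia; reflexivity|].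
  destruct (Nat.eq_dec k (S m)) as [->|Hk]; [rewrite desc_nil; reflexivity|].
  rewrite <- Nat.add_1_r, desc_cons by lia. simpl. rewrite IH by lia.
  unfold act, swap. simpl. rewrite Nat.eqb_refl. reflexivity.
Qed.

Lemma phiHT_app u v : phiHT (u ++ v) = phiHT u ++ phiHT v.
Proof. apply filter_app. Qed.

Lemma phiHT_rhos l : phiHT (map rho l) = map rho l.
Proof.
  induction l as [|k l IH]; [reflexivity|]. unfold phiHT in *. simpl. rewrite IH. reflexivity.
Qed.

Lemma permOf_phiHT w k : permOf (phiHT w) k = permOf w k.
Proof.
  induction w as [|[[i|i|i] b] w IH]; [reflexivity| |simpl|simpl]; unfold phiHT in *; simpl;
    rewrite IH; reflexivity.
Qed.

Definition sigma_free (u : word) : Prop := Forall (fun a => is_sigma a = false) u.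

Lemma sigma_free_phiHT w : sigma_free (phiHT w).
Proof.
  apply Forall_forall. intros x Hx. apply filter_In in Hx as [_ Hx].
  destruct (is_sigma x); [discriminate | reflexivity].
Qed.

Section Presentation.

Variable n : nat.

#[export] Instance eqv_Equivalence : Equivalence (eqv n).
Proof. split; [intros x; apply E_refl | intros x y; apply E_sym | intros x y z; apply E_trans]. Qed.

Lemma eqv_app_l u w w' : eqv n w w' -> eqv n (u ++ w) (u ++ w').
Proof. intro H. pose proof (E_ctx n u [] w w' H) as H'. rewrite !app_nil_r in H'. exact H'. Qed.

Lemma eqv_app_r v w w' : eqv n w w' -> eqv n (w ++ v) (w' ++ v).
Proof. exact (E_ctx n [] v w w'). Qed.

#[export] Instance app_eqv_Proper : Proper (eqv n ==> eqv n ==> eqv n) (@app letter).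
Proof. intros a b H c d H'. transitivity (a ++ d); [apply eqv_app_l | apply eqv_app_r]; auto. Qed.

#[export] Instance cons_eqv_Proper x : Proper (eqv n ==> eqv n) (cons x).
Proof. intros a b H. exact (eqv_app_l [x] a b H). Qed.

Lemma rel_tail l l' t : rel n l l' -> eqv n (l ++ t) (l' ++ t).
Proof. intro H. apply eqv_app_r, E_rel, H. Qed.

Lemma flip_cancel x t : eqv n (x :: flip x :: t) t.
Proof. exact (eqv_app_r t _ _ (E_free n x)). Qed.

Lemma rho_rho i t : 1 <= i <= n - 1 -> eqv n (rho i :: rho i :: t) t.
Proof. intro Hi. exact (rel_tail _ _ t (R_rsq n i Hi)). Qed.

Lemma gamma_gamma i t : 1 <= i <= n -> eqv n (gamma i :: gamma i :: t) t.
Proof. intro Hi. exact (rel_tail _ _ t (R_gsq n i Hi)). Qed.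

Lemma rho_braid i t : 1 <= i <= n - 2 ->
  eqv n (rho i :: rho (i + 1) :: rho i :: t) (rho (i + 1) :: rho i :: rho (i + 1) :: t).
Proof. intro Hi. exact (rel_tail _ _ t (R_rbraid n i Hi)). Qed.

Lemma rho_comm i j t : 1 <= i <= n - 1 -> 1 <= j <= n - 1 -> far i j ->
  eqv n (rho i :: rho j :: t) (rho j :: rho i :: t).
Proof. intros Hi Hj Hij. exact (rel_tail _ _ t (R_rcomm n i j Hi Hj Hij)). Qed.

Lemma sigma_rho_comm i j t : 1 <= i <= n - 1 -> 1 <= j <= n - 1 -> far i j ->
  eqv n (sigma i :: rho j :: t) (rho j :: sigma i :: t).
Proof. intros Hi Hj Hij. exact (rel_tail _ _ t (R_srcomm n i j Hi Hj Hij)). Qed.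

Lemma rho_rho_sigma i t : 1 <= i <= n - 2 ->
  eqv n (rho i :: rho (i + 1) :: sigma i :: t) (sigma (i + 1) :: rho i :: rho (i + 1) :: t).
Proof. intro Hi. exact (rel_tail _ _ t (R_mixed n i Hi)). Qed.

Lemma rho_gamma_diag i t : 1 <= i <= n - 1 ->
  eqv n (rho i :: gamma i :: t) (gamma (i + 1) :: rho i :: t).
Proof. intro Hi. exact (rel_tail _ _ t (R_rg n i Hi)). Qed.

Lemma gamma_rho_comm i j t : 1 <= i <= n - 1 -> 1 <= j <= n -> j <> i -> j <> i + 1 ->
  eqv n (gamma j :: rho i :: t) (rho i :: gamma j :: t).
Proof. intros Hi Hj Hji Hji'. exact (rel_tail _ _ t (R_grcomm n i j Hi Hj Hji Hji')). Qed.

Lemma rho_inv i t : 1 <= i <= n - 1 -> eqv n ((Rh i, true) :: t) (rho i :: t).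
Proof.
  intro Hi. rewrite <- (rho_rho i t Hi) at 1.
  rewrite (flip_cancel (Rh i, true) (rho i :: t)). reflexivity.
Qed.

Lemma gamma_inv i t : 1 <= i <= n -> eqv n ((Ga i, true) :: t) (gamma i :: t).
Proof.
  intro Hi. rewrite <- (gamma_gamma i t Hi) at 1.
  rewrite (flip_cancel (Ga i, true) (gamma i :: t)). reflexivity.
Qed.

Lemma app_inv_cancel_r w t : eqv n (w ++ inv w ++ t) t.
Proof.
  revert t. induction w as [|a w IH]; intro t; [reflexivity|].
  unfold inv. simpl. rewrite <- !app_assoc. simpl. fold (inv w).
  rewrite (IH (flip a :: t)). apply flip_cancel.
Qed.

Lemma app_inv_cancel_l w t : eqv n (inv w ++ w ++ t) t.
Proof. rewrite <- (inv_involutive w) at 2. apply app_inv_cancel_r. Qed.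

Lemma app_inv_r w : eqv n (w ++ inv w) [].
Proof. rewrite <- (app_nil_r (inv w)). apply app_inv_cancel_r. Qed.

Lemma app_inv_l w : eqv n (inv w ++ w) [].
Proof. rewrite <- (app_nil_r w) at 2. apply app_inv_cancel_l. Qed.

Lemma permOf_eqv w w' : eqv n w w' -> forall k, permOf w k = permOf w' k.
Proof.
  induction 1 as [| | |u v w w' _ IH|x|l l' Hrel]; intro k; try congruence.
  - rewrite !permOf_app, IH. reflexivity.
  - destruct x as [[i|i|i] b]; simpl; unfold act; simpl; auto using swap_involutive.
  - destruct Hrel; simpl; unfold act; simpl;
      auto using swap_involutive, swap_comm, swap_braid.
Qed.

Lemma phiHT_eqv w w' : eqv n w w' -> eqv n (phiHT w) (phiHT w').
Proof.
  induction 1 as [|w w' _ IH|w1 w2 w3 _ IH1 _ IH2|u v w w' _ IH|x|l l' Hrel].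
  - reflexivity.
  - symmetry. exact IH.
  - rewrite IH1. exact IH2.
  - rewrite !phiHT_app, IH. reflexivity.
  - destruct x as [[i|i|i] b]; [reflexivity | apply E_free | apply E_free].
  - destruct Hrel; simpl; try reflexivity; try (apply E_rel; constructor; auto; fail).
    (* the image of [R_rsr]: [rho_i rho_i = gamma_(i+1) gamma_i gamma_i gamma_(i+1)] *)
    pose proof (rho_rho i [] ltac:(lia)) as Er.
    pose proof (gamma_gamma i [gamma (i + 1)] ltac:(lia)) as Eg.
    pose proof (gamma_gamma (i + 1) [] ltac:(lia)) as Eg'.
    unfold rho, gamma in *. rewrite Er, Eg, Eg'. reflexivity.
Qed.

Lemma cons_comm_app a l t :
  (forall y t', In y l -> eqv n (a :: y :: t') (y :: a :: t')) ->
  eqv n (a :: l ++ t) (l ++ a :: t).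
Proof.
  revert t. induction l as [|y l IH]; intros t Hl; [reflexivity|]. simpl.
  rewrite Hl by (left; reflexivity). rewrite IH; [reflexivity|].
  intros; apply Hl; right; auto.
Qed.

Lemma rho_comm_rhos m l t : 1 <= m <= n - 1 ->
  (forall k, In k l -> 1 <= k <= n - 1 /\ far m k) ->
  eqv n (rho m :: map rho l ++ t) (map rho l ++ rho m :: t).
Proof.
  intros Hm Hl. apply cons_comm_app. intros y t' Hy.
  apply in_map_iff in Hy as [k [<- Hk]]. destruct (Hl k Hk). apply rho_comm; auto.
Qed.

Lemma involutions_rev_cancel (f : nat -> letter) (Q : nat -> Prop)
  (Hf : forall k t, Q k -> eqv n (f k :: f k :: t) t) l t :
  (forall k, In k l -> Q k) -> eqv n (map f (rev l) ++ map f l ++ t) t.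
Proof.
  revert t. induction l as [|a l IH]; intros t Hl; [reflexivity|].
  simpl. rewrite map_app, <- app_assoc. simpl. rewrite Hf by (apply Hl; left; auto).
  apply IH. intros; apply Hl; right; auto.
Qed.

Lemma rhos_rev_cancel l t : (forall k, In k l -> 1 <= k <= n - 1) ->
  eqv n (map rho (rev l) ++ map rho l ++ t) t.
Proof. apply involutions_rev_cancel. intros; apply rho_rho; auto. Qed.

Lemma rhos_cancel_rev l t : (forall k, In k l -> 1 <= k <= n - 1) ->
  eqv n (map rho l ++ map rho (rev l) ++ t) t.
Proof.
  intro Hl. rewrite <- (rev_involutive l) at 1. apply rhos_rev_cancel.
  intros k Hk. apply Hl, in_rev, Hk.
Qed.

Lemma gammas_cancel_rev l t : (forall k, In k l -> 1 <= k <= n) ->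
  eqv n (map gamma l ++ map gamma (rev l) ++ t) t.
Proof.
  intro Hl. rewrite <- (rev_involutive l) at 1.
  apply (involutions_rev_cancel gamma (fun k => 1 <= k <= n)).
  - intros; apply gamma_gamma; auto.
  - intros k Hk. apply Hl, in_rev, Hk.
Qed.

Lemma rho_desc_shift a m b t : 1 <= a <= m -> m + 2 <= b -> b <= n ->
  eqv n (rho m :: map rho (desc a b) ++ t) (map rho (desc a b) ++ rho (m + 1) :: t).
Proof.
  intros Ha Hb Hn. remember (b - (m + 2)) as d. revert b Hb Hn Heqd.
  induction d as [|d IH]; intros b Hb Hn Hd.
  - replace b with (m + 1 + 1) by lia. rewrite !desc_cons by lia. simpl.
    rewrite rho_braid by lia. apply cons_eqv_Proper, cons_eqv_Proper, rho_comm_rhos; [lia|].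
    intros k Hk. apply in_desc in Hk. unfold far. lia.
  - replace b with (b - 1 + 1) by lia. rewrite desc_cons by lia. simpl.
    rewrite rho_comm by (unfold far; lia). apply cons_eqv_Proper, IH; lia.
Qed.

Lemma asc_rho_shift a m b t : 1 <= a <= m -> m + 2 <= b -> b <= n ->
  eqv n (map rho (asc a b) ++ rho m :: t) (rho (m + 1) :: map rho (asc a b) ++ t).
Proof.
  intros Ha Hb Hn.
  assert (Hasc : forall k, In k (asc a b) -> 1 <= k <= n - 1)
    by (intros k Hk; apply in_asc in Hk; lia).
  pose proof (rho_desc_shift a m b (map rho (asc a b) ++ t) Ha Hb Hn) as E.
  unfold desc in E. rewrite (rhos_rev_cancel _ t Hasc) in E.
  rewrite E, rhos_cancel_rev by exact Hasc. reflexivity.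
Qed.

Lemma rho_gamma m j t : 1 <= m <= n - 1 -> 1 <= j <= n ->
  eqv n (rho m :: gamma j :: t) (gamma (swap m j) :: rho m :: t).
Proof.
  intros Hm Hj. unfold swap. destruct (Nat.eqb_spec j m) as [->|Hjm].
  - apply rho_gamma_diag; auto.
  - destruct (Nat.eqb_spec j (m + 1)) as [->|Hjm'].
    + rewrite <- (rho_rho m (gamma m :: rho m :: t) Hm).
      rewrite (rho_gamma_diag m (rho m :: t) Hm), rho_rho by exact Hm. reflexivity.
    + symmetry. apply gamma_rho_comm; auto.
Qed.

Lemma rho_gammas m l t : 1 <= m <= n - 1 -> (forall j, In j l -> 1 <= j <= n) ->
  eqv n (rho m :: map gamma l ++ t) (map gamma (map (swap m) l) ++ rho m :: t).
Proof.
  intro Hm. revert t. induction l as [|j l IH]; intros t Hl; [reflexivity|]. simpl.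
  rewrite rho_gamma by (auto; apply Hl; left; auto).
  apply cons_eqv_Proper, IH. intros; apply Hl; right; auto.
Qed.

(* The descending words [rho_(m-1) ... rho_k] represent the cosets of [S_(m-1)] in [S_m]:
   appending a letter either changes the representative or moves a letter into [S_(m-1)]. *)
Lemma rhos_desc_factor m : 1 <= m <= n -> forall p, (forall i, In i p -> 1 <= i <= m - 1) ->
  exists p' k, (forall i, In i p' -> 1 <= i <= m - 2) /\ 1 <= k <= m /\
    eqv n (map rho p) (map rho p' ++ map rho (desc k m)).
Proof.
  intros Hm p. induction p as [|i p IH] using rev_ind; intros Hp.
  { exists [], m. rewrite desc_nil. split; [simpl; tauto | split; [lia | reflexivity]]. }
  destruct IH as [p' [k [Hp' [Hk E]]]]; [intros; apply Hp, in_or_app; auto|].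
  assert (Hi : 1 <= i <= m - 1) by (apply Hp, in_or_app; right; left; auto).
  assert (E' : eqv n (map rho (p ++ [i])) (map rho p' ++ map rho (desc k m) ++ [rho i])).
  { rewrite map_app, E, <- app_assoc. reflexivity. }
  assert (Hsnoc : forall j, 1 <= j <= m - 2 -> forall x, In x (p' ++ [j]) -> 1 <= x <= m - 2).
  { intros j Hj x Hx. apply in_app_or in Hx as [Hx|[<-|[]]]; auto. }
  destruct (le_lt_dec (i + 2) k) as [Hfar|Hnear].
  - exists (p' ++ [i]), k. split; [apply Hsnoc; lia | split; [lia|]].
    rewrite E', <- rho_comm_rhos by (lia || (intros x Hx; apply in_desc in Hx; unfold far; lia)).
    rewrite map_app, <- app_assoc, app_nil_r. reflexivity.
  - destruct (Nat.eq_dec (i + 1) k) as [<-|Hk1].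
    { exists p', i. split; [exact Hp' | split; [lia|]].
      rewrite E', (desc_snoc i m), !map_app by lia. reflexivity. }
    destruct (Nat.eq_dec i k) as [<-|Hk0].
    { exists p', (i + 1). split; [exact Hp' | split; [lia|]].
      rewrite E', (desc_snoc i m), map_app, <- app_assoc by lia. simpl.
      rewrite rho_rho, app_nil_r by lia. reflexivity. }
    exists (p' ++ [i - 1]), k. split; [apply Hsnoc; lia | split; [lia|]].
    pose proof (rho_desc_shift k (i - 1) m [] ltac:(lia) ltac:(lia) ltac:(lia)) as Eshift.
    replace (i - 1 + 1) with i in Eshift by lia.
    rewrite E', <- Eshift, map_app, <- app_assoc, app_nil_r. reflexivity.
Qed.

Lemma rhos_trivial m : m <= n -> forall p, (forall i, In i p -> 1 <= i <= m - 1) ->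
  (forall k, 1 <= k <= m -> permOf (map rho p) k = k) -> eqv n (map rho p) [].
Proof.
  induction m as [|m IH]; intros Hmn p Hp Hperm.
  { destruct p as [|i p]; [reflexivity|]. specialize (Hp i (or_introl eq_refl)). lia. }
  destruct (Nat.eq_dec m 0) as [->|Hm0].
  { destruct p as [|i p]; [reflexivity|]. specialize (Hp i (or_introl eq_refl)). lia. }
  destruct (rhos_desc_factor (S m) ltac:(lia) p Hp) as [p' [k [Hp' [Hk E]]]].
  assert (Hk_top : k = S m).
  { pose proof (permOf_eqv _ _ E k) as Ek.
    rewrite permOf_app, permOf_rhos_desc in Ek by lia.
    rewrite (permOf_rhos_fix p'), Hperm in Ek by (lia || (intros i Hi; specialize (Hp' i Hi); lia)).
    exact Ek. }
  subst k. rewrite desc_nil, app_nil_r in E. rewrite E.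
  apply IH; [lia | intros i Hi; specialize (Hp' i Hi); lia |].
  intros x Hx. rewrite <- (permOf_eqv _ _ E x). apply Hperm. lia.
Qed.

Lemma wf_app u v : wf n u -> wf n v -> wf n (u ++ v).
Proof. intros Hu Hv. apply Forall_app. auto. Qed.

Lemma wf_app_inv u v : wf n (u ++ v) -> wf n u /\ wf n v.
Proof. apply (Forall_app _ u v). Qed.

Lemma wf_gammas l : (forall j, In j l -> 1 <= j <= n) -> wf n (map gamma l).
Proof. intro Hl. apply Forall_map, Forall_forall. exact Hl. Qed.

Lemma wf_rhos l : (forall j, In j l -> 1 <= j <= n - 1) -> wf n (map rho l).
Proof. intro Hl. apply Forall_map, Forall_forall. exact Hl. Qed.

Lemma wf_inv u : wf n u -> wf n (inv u).
Proof. intro Hu. apply Forall_rev, Forall_map. exact Hu. Qed.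

Lemma wf_phiHT w : wf n w -> wf n (phiHT w).
Proof.
  intro Hw. apply Forall_forall. intros x Hx. apply filter_In in Hx as [Hx _].
  exact (proj1 (Forall_forall _ _) Hw x Hx).
Qed.

Lemma sigma_free_normal_form u : wf n u -> sigma_free u ->
  exists l p, (forall j, In j l -> 1 <= j <= n) /\ (forall i, In i p -> 1 <= i <= n - 1) /\
    eqv n u (map gamma l ++ map rho p).
Proof.
  induction u as [|a u IH]; intros Hw Hs.
  { exists [], []. split; [simpl; tauto | split; [simpl; tauto | reflexivity]]. }
  inversion Hw as [|? ? Ha Hw']; inversion Hs as [|? ? Ha' Hs']; subst.
  destruct (IH Hw' Hs') as [l [p [Hl [Hp E]]]].
  destruct a as [[i|i|i] b]; simpl in Ha, Ha'; try discriminate.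
  - exists (map (swap i) l), (i :: p). split; [|split].
    + intros j Hj. apply in_map_iff in Hj as [j0 [<- Hj0]]. apply swap_range; auto.
    + intros k [<-|Hk]; auto.
    + transitivity (rho i :: u); [destruct b; [apply rho_inv; auto | reflexivity]|].
      rewrite E, rho_gammas by auto. reflexivity.
  - exists (i :: l), p. split; [intros k [<-|Hk]; auto | split; [exact Hp|]].
    transitivity (gamma i :: u); [destruct b; [apply gamma_inv; auto | reflexivity]|].
    rewrite E. reflexivity.
Qed.

Lemma sigma_free_trivial_perm u : wf n u -> sigma_free u ->
  (forall k, 1 <= k <= n -> permOf u k = k) ->
  exists l, (forall j, In j l -> 1 <= j <= n) /\ eqv n u (map gamma l).
Proof.
  intros Hw Hs Hperm. destruct (sigma_free_normal_form u Hw Hs) as [l [p [Hl [Hp E]]]].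
  exists l. split; [exact Hl|].
  assert (Ep : eqv n (map rho p) []).
  { apply (rhos_trivial n (le_n n) p Hp). intros k Hk.
    rewrite <- (Hperm k Hk) at 2. rewrite (permOf_eqv _ _ E k), permOf_app, permOf_gammas.
    reflexivity. }
  rewrite E, Ep, app_nil_r. reflexivity.
Qed.

Lemma x_up_eq i j : x_up i j = map rho (desc (i + 1) j) ++ sigma i :: map rho (asc (i + 1) j).
Proof. unfold x_up, desc. rewrite map_rev. reflexivity. Qed.

Lemma x_down_eq i j : x_down i j = map rho (desc i j) ++ sigma i :: map rho (asc i j).
Proof. unfold x_down, desc. rewrite map_rev. reflexivity. Qed.

Lemma x_up_succ i : x_up i (i + 1) = [sigma i].
Proof. rewrite x_up_eq, desc_nil, asc_nil. reflexivity. Qed.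

Lemma x_down_succ i : x_down i (i + 1) = [rho i; sigma i; rho i].
Proof. rewrite x_down_eq, desc_cons, asc_snoc, desc_nil, asc_nil by lia. reflexivity. Qed.

Lemma x_up_snoc i j : i < j -> x_up i (j + 1) = rho j :: x_up i j ++ [rho j].
Proof.
  intro Hij. rewrite !x_up_eq, desc_cons, asc_snoc, map_app by lia. simpl.
  rewrite <- !app_assoc. reflexivity.
Qed.

Lemma x_down_snoc i j : i < j -> x_down i (j + 1) = rho j :: x_down i j ++ [rho j].
Proof.
  intro Hij. rewrite !x_down_eq, desc_cons, asc_snoc, map_app by lia. simpl.
  rewrite <- !app_assoc. reflexivity.
Qed.

Definition is_x (x : word) : Prop :=
  exists i j, 1 <= i /\ i < j /\ j <= n /\ (x = x_up i j \/ x = x_down i j).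

(* The instances of [rho_a x_(k,l) rho_a = x_(tau k, tau l)], [tau = (a, a+1)], for the four
   generators pairing [a + 2] with [a] or [a + 1]. *)
Lemma rho_sigma_succ_rho a t : 1 <= a <= n - 2 ->
  eqv n (rho a :: sigma (a + 1) :: rho a :: t) (rho (a + 1) :: sigma a :: rho (a + 1) :: t).
Proof.
  intro Ha. rewrite <- (rho_rho (a + 1) t) at 1 by lia.
  rewrite <- (rho_rho_sigma a (rho (a + 1) :: t)), rho_rho by lia. reflexivity.
Qed.

Lemma rho_rho_sigma_rho_rho a t : 1 <= a <= n - 2 ->
  eqv n (rho a :: rho (a + 1) :: sigma a :: rho (a + 1) :: rho a :: t) (sigma (a + 1) :: t).
Proof. intro Ha. rewrite rho_rho_sigma, (rho_rho (a + 1)), rho_rho by lia. reflexivity. Qed.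

Lemma rho_rho_sigma_succ_rho_rho a t : 1 <= a <= n - 2 ->
  eqv n (rho a :: rho (a + 1) :: sigma (a + 1) :: rho (a + 1) :: rho a :: t)
        (rho (a + 1) :: rho a :: sigma a :: rho a :: rho (a + 1) :: t).
Proof.
  intro Ha. symmetry.
  transitivity (rho (a + 1) :: rho a :: rho (a + 1) :: rho a :: sigma (a + 1) :: rho a ::
                rho (a + 1) :: rho a :: rho (a + 1) :: t).
  { rewrite <- (rho_rho_sigma a (rho a :: rho (a + 1) :: t)), (rho_rho a), (rho_rho (a + 1))
      by lia. reflexivity. }
  rewrite <- (rho_braid a (rho a :: sigma (a + 1) :: rho a :: rho (a + 1) :: rho a ::
                rho (a + 1) :: t)), (rho_rho a), (rho_braid a (rho (a + 1) :: t)),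
    (rho_rho (a + 1) t) by lia.
  reflexivity.
Qed.

Lemma rho_rho_rho_sigma_rho_rho_rho a t : 1 <= a <= n - 2 ->
  eqv n (rho a :: rho (a + 1) :: rho a :: sigma a :: rho a :: rho (a + 1) :: rho a :: t)
        (rho (a + 1) :: sigma (a + 1) :: rho (a + 1) :: t).
Proof.
  intro Ha. rewrite (rho_braid a (sigma a :: _)), (rho_braid a t),
    (rho_rho_sigma_rho_rho a (rho (a + 1) :: t)) by lia.
  reflexivity.
Qed.

Lemma app_cons_assoc {A} (a b : A) (l1 l2 t : list A) :
  a :: (l1 ++ b :: l2) ++ t = a :: l1 ++ b :: l2 ++ t.
Proof. rewrite <- app_assoc. reflexivity. Qed.

Lemma rho_conj_far m i l1 l2 t : 1 <= m <= n - 1 -> 1 <= i <= n - 1 -> far i m ->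
  (forall k, In k l1 -> 1 <= k <= n - 1 /\ far m k) ->
  (forall k, In k l2 -> 1 <= k <= n - 1 /\ far m k) ->
  eqv n (rho m :: (map rho l1 ++ sigma i :: map rho l2) ++ rho m :: t)
        ((map rho l1 ++ sigma i :: map rho l2) ++ t).
Proof.
  intros Hm Hi Hf H1 H2. rewrite app_cons_assoc, <- (rho_comm_rhos m l2 t) by auto.
  rewrite (sigma_rho_comm i m), rho_comm_rhos, rho_rho, <- app_assoc by auto. reflexivity.
Qed.

Lemma rho_conj_shift m i a b t : 1 <= i <= n - 1 -> 1 <= a <= m -> m + 2 <= b -> b <= n ->
  i + 2 <= m + 1 ->
  eqv n (rho m :: (map rho (desc a b) ++ sigma i :: map rho (asc a b)) ++ rho m :: t)
        ((map rho (desc a b) ++ sigma i :: map rho (asc a b)) ++ t).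
Proof.
  intros. rewrite app_cons_assoc, asc_rho_shift, rho_desc_shift by lia.
  rewrite (sigma_rho_comm i (m + 1)), rho_rho, <- app_assoc by (unfold far; lia).
  reflexivity.
Qed.

Ltac far_range := first
  [ intros k Hk; apply in_asc in Hk; split; [lia | unfold far; lia]
  | intros k Hk; apply in_desc in Hk; split; [lia | unfold far; lia]
  | unfold far; lia ].

Lemma rho_conj_x_up m i j t : 1 <= m <= n - 1 -> 1 <= i -> i < j -> j <= n ->
  exists x, is_x x /\ eqv n (rho m :: x_up i j ++ rho m :: t) (x ++ t).
Proof.
  intros Hm Hi Hij Hj.
  assert (C : m + 2 <= i \/ m + 1 = i \/ (m = i /\ j = i + 1) \/ (m = i /\ i + 2 <= j)
     \/ (i + 1 <= m /\ m + 2 <= j) \/ (m + 1 = j /\ i < m) \/ m = j \/ j + 1 <= m) by lia.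
  destruct C as [C|[C|[C|[C|[C|[C|[C|C]]]]]]].
  - exists (x_up i j). split; [exists i, j; auto|].
    rewrite x_up_eq. apply rho_conj_far; far_range.
  - subst i. exists (x_up m j). split; [exists m, j; repeat split; auto; lia|].
    rewrite !x_up_eq, app_cons_assoc, (desc_snoc (m + 1) j), (asc_cons (m + 1) j) by lia.
    rewrite map_app, <- app_assoc. simpl.
    rewrite <- (rho_comm_rhos m (asc (m + 1 + 1) j) t),
      (rho_comm_rhos m (desc (m + 1 + 1) j)) by far_range.
    rewrite rho_sigma_succ_rho, <- !app_assoc by lia. reflexivity.
  - destruct C as [-> ->]. exists (x_down i (i + 1)).
    split; [exists i, (i + 1); repeat split; auto; lia|].
    rewrite x_up_succ, x_down_succ. reflexivity.
  - destruct C as [-> C]. exists (x_up (i + 1) j).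
    split; [exists (i + 1), j; repeat split; auto; lia|].
    rewrite !x_up_eq, app_cons_assoc, (desc_snoc (i + 1) j), (asc_cons (i + 1) j) by lia.
    rewrite map_app, <- app_assoc. simpl.
    rewrite <- (rho_comm_rhos i (asc (i + 1 + 1) j) t),
      (rho_comm_rhos i (desc (i + 1 + 1) j)) by far_range.
    rewrite rho_rho_sigma_rho_rho, <- !app_assoc by lia. reflexivity.
  - exists (x_up i j). split; [exists i, j; auto|].
    rewrite x_up_eq. apply rho_conj_shift; lia.
  - destruct C as [<- C]. exists (x_up i m). split; [exists i, m; repeat split; auto; lia|].
    rewrite x_up_snoc by lia. simpl. rewrite rho_rho, <- app_assoc by lia. simpl.
    rewrite rho_rho by lia. reflexivity.
  - subst m. exists (x_up i (j + 1)). split; [exists i, (j + 1); repeat split; auto; lia|].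
    rewrite x_up_snoc by lia. simpl. rewrite <- app_assoc. reflexivity.
  - exists (x_up i j). split; [exists i, j; auto|].
    rewrite x_up_eq. apply rho_conj_far; far_range.
Qed.

Lemma rho_conj_x_down m i j t : 1 <= m <= n - 1 -> 1 <= i -> i < j -> j <= n ->
  exists x, is_x x /\ eqv n (rho m :: x_down i j ++ rho m :: t) (x ++ t).
Proof.
  intros Hm Hi Hij Hj.
  assert (C : m + 2 <= i \/ m + 1 = i \/ (m = i /\ j = i + 1) \/ (m = i /\ i + 2 <= j)
     \/ (i + 1 <= m /\ m + 2 <= j) \/ (m + 1 = j /\ i < m) \/ m = j \/ j + 1 <= m) by lia.
  destruct C as [C|[C|[C|[C|[C|[C|[C|C]]]]]]].
  - exists (x_down i j). split; [exists i, j; auto|].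
    rewrite x_down_eq. apply rho_conj_far; far_range.
  - subst i. exists (x_down m j). split; [exists m, j; repeat split; auto; lia|].
    rewrite !x_down_eq, app_cons_assoc, (desc_snoc m j), (asc_cons m j) by lia.
    rewrite (desc_snoc (m + 1) j), (asc_cons (m + 1) j) by lia.
    rewrite !map_app, <- !app_assoc. simpl.
    rewrite <- (rho_comm_rhos m (asc (m + 1 + 1) j) t),
      (rho_comm_rhos m (desc (m + 1 + 1) j)) by far_range.
    rewrite rho_rho_sigma_succ_rho_rho by lia. reflexivity.
  - destruct C as [-> ->]. exists (x_up i (i + 1)).
    split; [exists i, (i + 1); repeat split; auto; lia|].
    rewrite x_up_succ, x_down_succ. simpl. rewrite !rho_rho by lia. reflexivity.
  - destruct C as [-> C]. exists (x_down (i + 1) j).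
    split; [exists (i + 1), j; repeat split; auto; lia|].
    rewrite !x_down_eq, app_cons_assoc, (desc_snoc i j), (asc_cons i j) by lia.
    rewrite (desc_snoc (i + 1) j), (asc_cons (i + 1) j) by lia.
    rewrite !map_app, <- !app_assoc. simpl.
    rewrite <- (rho_comm_rhos i (asc (i + 1 + 1) j) t),
      (rho_comm_rhos i (desc (i + 1 + 1) j)) by far_range.
    rewrite rho_rho_rho_sigma_rho_rho_rho by lia. reflexivity.
  - exists (x_down i j). split; [exists i, j; auto|].
    rewrite x_down_eq. apply rho_conj_shift; lia.
  - destruct C as [<- C]. exists (x_down i m). split; [exists i, m; repeat split; auto; lia|].
    rewrite x_down_snoc by lia. simpl. rewrite rho_rho, <- app_assoc by lia. simpl.
    rewrite rho_rho by lia. reflexivity.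
  - subst m. exists (x_down i (j + 1)). split; [exists i, (j + 1); repeat split; auto; lia|].
    rewrite x_down_snoc by lia. simpl. rewrite <- app_assoc. reflexivity.
  - exists (x_down i j). split; [exists i, j; auto|].
    rewrite x_down_eq. apply rho_conj_far; far_range.
Qed.

Lemma rho_conj_x m x t : 1 <= m <= n - 1 -> is_x x ->
  exists x', is_x x' /\ eqv n (rho m :: x ++ rho m :: t) (x' ++ t).
Proof.
  intros Hm [i [j [Hi [Hij [Hj [-> | ->]]]]]];
    [apply rho_conj_x_up | apply rho_conj_x_down]; auto.
Qed.

Lemma TVH_nil : TVH n [].
Proof. split; [constructor | reflexivity]. Qed.

Lemma TVH_app u v : TVH n u -> TVH n v -> TVH n (u ++ v).
Proof.
  intros [Hu Pu] [Hv Pv]. split; [apply wf_app; auto|].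
  intros k Hk. rewrite permOf_app, Pv, Pu; auto.
Qed.

Lemma TVH_gammas l : (forall j, In j l -> 1 <= j <= n) -> TVH n (map gamma l).
Proof. intro Hl. split; [apply wf_gammas, Hl | intros; apply permOf_gammas]. Qed.

Lemma TVH_x x : is_x x -> TVH n x.
Proof.
  intros [i [j [Hi [Hij [Hj [-> | ->]]]]]]; [rewrite x_up_eq | rewrite x_down_eq];
    (split; [|intros k _; rewrite permOf_app; apply permOf_rhos_rev]);
    (apply wf_app; [|constructor; [simpl; lia|]]; apply wf_rhos;
     intros k Hk; first [apply in_desc in Hk | apply in_asc in Hk]; lia).
Qed.

Lemma TVH_inv u : TVH n u -> TVH n (inv u).
Proof.
  intros [Hu Pu]. split; [apply wf_inv, Hu|]. intros k Hk.
  pose proof (permOf_eqv _ _ (app_inv_cancel_l u []) k) as E.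
  rewrite app_nil_r, permOf_app, Pu in E by exact Hk. exact E.
Qed.

Lemma TVH_phiHT w : TVH n w -> TVH n (phiHT w).
Proof.
  intros [Hw Pw]. split; [apply wf_phiHT, Hw|]. intros k Hk. rewrite permOf_phiHT. auto.
Qed.

Lemma TVH_eqv u v : wf n u -> eqv n u v -> TVH n v -> TVH n u.
Proof. intros Hu E [_ Pv]. split; [exact Hu|]. intros k Hk. rewrite (permOf_eqv _ _ E). auto. Qed.

Lemma HT_TVH w : HT n w -> TVH n w.
Proof.
  intros [Hw E]. split; [exact Hw|]. intros k _.
  rewrite <- permOf_phiHT, (permOf_eqv _ _ E k). reflexivity.
Qed.

Lemma phiHT_rhos_conj_sigma l i : (forall k, In k l -> 1 <= k <= n - 1) ->
  eqv n (phiHT (map rho (rev l) ++ sigma i :: map rho l)) [].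
Proof.
  intro Hl. rewrite phiHT_app, phiHT_rhos. unfold phiHT at 1. simpl. fold (phiHT (map rho l)).
  rewrite phiHT_rhos, <- (app_nil_r (map rho l)). apply rhos_rev_cancel, Hl.
Qed.

Lemma phiHT_is_psiH : is_psiH n phiHT.
Proof.
  split; [intros; apply phiHT_eqv; auto|].
  split; [intros; rewrite phiHT_app; reflexivity|].
  split.
  { intros w [Hw Pw].
    destruct (sigma_free_trivial_perm (phiHT w) (wf_phiHT w Hw) (sigma_free_phiHT w))
      as [l [Hl E]]; [intros k Hk; rewrite permOf_phiHT; auto|].
    exists (map gamma l). split; [apply wf_gammas, Hl|]. split; [|exact E].
    apply Forall_map, Forall_forall. intros. exact I. }
  split; [|reflexivity].
  intros i j Hi Hij Hj. rewrite x_up_eq, x_down_eq.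
  split; apply phiHT_rhos_conj_sigma; intros k Hk; apply in_asc in Hk; lia.
Qed.

Definition gamma_conj_x (u : word) : Prop :=
  wf n u /\ exists l x, (forall j, In j l -> 1 <= j <= n) /\ is_x x /\
    eqv n u (map gamma l ++ x ++ map gamma (rev l)).

Lemma gamma_conj_x_conj a u : valid_gen n (fst a) -> is_sigma a = false ->
  gamma_conj_x u -> gamma_conj_x ([a] ++ u ++ [flip a]).
Proof.
  intros Ha Hs [Hu [l [x [Hl [Hx E]]]]].
  split; [repeat apply wf_app; auto; repeat constructor; auto|].
  destruct a as [[i|i|i] b]; simpl in Ha, Hs; try discriminate.
  - assert (Eb : eqv n ([(Rh i, b)] ++ u ++ [flip (Rh i, b)]) (rho i :: u ++ [rho i])).
    { destruct b; simpl; [rewrite rho_inv by exact Ha | rewrite (rho_inv i []) by exact Ha];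
        reflexivity. }
    assert (Hl' : forall j, In j (map (swap i) (rev l)) -> 1 <= j <= n).
    { intros j Hj. apply in_map_iff in Hj as [j0 [<- Hj0]].
      apply swap_range, Hl, in_rev; auto. }
    destruct (rho_conj_x i x (map gamma (map (swap i) (rev l))) Ha Hx) as [x' [Hx' Ex]].
    exists (map (swap i) l), x'. split; [|split; [exact Hx'|]].
    { intros j Hj. apply in_map_iff in Hj as [j0 [<- Hj0]]. apply swap_range; auto. }
    pose proof (rho_gammas i (map (swap i) (rev l)) [] Ha Hl') as Eg.
    rewrite map_swap_involutive in Eg.
    rewrite Eb, E, <- !app_assoc, rho_gammas by auto.
    rewrite <- Eg, app_nil_r, Ex, map_rev. reflexivity.
  - assert (Eb : eqv n ([(Ga i, b)] ++ u ++ [flip (Ga i, b)]) (gamma i :: u ++ [gamma i])).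
    { destruct b; simpl; [rewrite gamma_inv by exact Ha | rewrite (gamma_inv i []) by exact Ha];
        reflexivity. }
    exists (i :: l), x. split; [intros j [<-|Hj]; auto | split; [exact Hx|]].
    rewrite Eb, E. simpl. rewrite map_app, <- !app_assoc. reflexivity.
Qed.

Lemma sigma_conj_gamma_conj_x i q : 1 <= i <= n - 1 -> wf n q -> sigma_free q ->
  gamma_conj_x (q ++ [sigma i] ++ inv q).
Proof.
  intro Hi. induction q as [|a q IH]; intros Hq Hs.
  - split; [repeat constructor; simpl; lia|].
    exists [], (x_up i (i + 1)). split; [simpl; tauto|].
    split; [exists i, (i + 1); repeat split; auto; lia|]. rewrite x_up_succ. reflexivity.
  - inversion Hq; inversion Hs; subst.
    replace ((a :: q) ++ [sigma i] ++ inv (a :: q))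
      with ([a] ++ (q ++ [sigma i] ++ inv q) ++ [flip a])
      by (unfold inv; simpl; rewrite <- !app_assoc; reflexivity).
    apply gamma_conj_x_conj; auto.
Qed.

Section Kernel.

Variable psi : word -> word.
Hypothesis psi_spec : is_psiH n psi.

Lemma psi_eqv w w' : TVH n w -> TVH n w' -> eqv n w w' -> eqv n (psi w) (psi w').
Proof. apply psi_spec. Qed.

Lemma psi_app w w' : TVH n w -> TVH n w' -> eqv n (psi (w ++ w')) (psi w ++ psi w').
Proof. apply psi_spec. Qed.

Lemma psi_nil : eqv n (psi []) [].
Proof.
  pose proof (psi_app [] [] TVH_nil TVH_nil) as E. simpl in E.
  transitivity (inv (psi []) ++ psi [] ++ psi []); [symmetry; apply app_inv_cancel_l|].
  rewrite <- E. apply app_inv_l.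
Qed.

Lemma psi_gamma j : 1 <= j <= n -> eqv n (psi (g j)) (g j).
Proof. apply psi_spec. Qed.

Lemma psi_gammas l : (forall j, In j l -> 1 <= j <= n) -> eqv n (psi (map gamma l)) (map gamma l).
Proof.
  induction l as [|j l IH]; intro Hl; [apply psi_nil|].
  assert (Hj : 1 <= j <= n) by (apply Hl; left; auto).
  assert (Hl' : forall k, In k l -> 1 <= k <= n) by (intros; apply Hl; right; auto).
  assert (Tj : TVH n (g j)) by (apply (TVH_gammas [j]); intros k [<-|[]]; exact Hj).
  change (map gamma (j :: l)) with (g j ++ map gamma l).
  rewrite (psi_app _ _ Tj (TVH_gammas l Hl')), IH, psi_gamma by assumption. reflexivity.
Qed.

Lemma HL_app u v : HL n psi u -> HL n psi v -> HL n psi (u ++ v).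
Proof.
  intros [Tu Eu] [Tv Ev]. split; [apply TVH_app; auto|].
  rewrite psi_app, Eu, Ev by auto. reflexivity.
Qed.

Lemma HL_inv u : HL n psi u -> HL n psi (inv u).
Proof.
  intros [Tu Eu]. pose proof (TVH_inv u Tu) as Tu'. split; [exact Tu'|].
  assert (E : eqv n (psi (u ++ inv u)) (psi [])).
  { apply psi_eqv; [apply TVH_app; auto | apply TVH_nil|].
    apply app_inv_r. }
  rewrite psi_app, Eu, psi_nil in E by auto. exact E.
Qed.

Lemma gamma_conj_x_HL u : gamma_conj_x u -> HL n psi u.
Proof.
  intros [Hu [l [x [Hl [Hx E]]]]].
  assert (Hl' : forall j, In j (rev l) -> 1 <= j <= n) by (intros j Hj; apply Hl, in_rev, Hj).
  assert (Tx := TVH_x x Hx).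
  assert (Tgx : TVH n (x ++ map gamma (rev l))) by (apply TVH_app, TVH_gammas; auto).
  assert (T : TVH n (map gamma l ++ x ++ map gamma (rev l)))
    by (apply TVH_app, Tgx; apply TVH_gammas, Hl).
  assert (Ex : eqv n (psi x) []).
  { destruct Hx as [i [j [Hi [Hij [Hj [-> | ->]]]]]]; apply psi_spec; auto. }
  split; [exact (TVH_eqv _ _ Hu E T)|].
  rewrite (psi_eqv _ _ (TVH_eqv _ _ Hu E T) T E), psi_app, psi_app, Ex, !psi_gammas
    by (auto || apply TVH_gammas; auto).
  simpl. rewrite <- (app_nil_r (map gamma (rev l))). apply gammas_cancel_rev, Hl.
Qed.

Lemma HL_sigma_conj i b q : 1 <= i <= n - 1 -> wf n q -> sigma_free q ->
  HL n psi (q ++ [(Sg i, b)] ++ inv q).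
Proof.
  intros Hi Hq Hs. pose proof (sigma_conj_gamma_conj_x i q Hi Hq Hs) as C.
  destruct b; [|apply gamma_conj_x_HL, C].
  replace (q ++ [(Sg i, true)] ++ inv q) with (inv (q ++ [sigma i] ++ inv q))
    by (rewrite !inv_app, inv_involutive, app_assoc; reflexivity).
  apply HL_inv, gamma_conj_x_HL, C.
Qed.

(* Writing each sigma letter of [w] as [q sigma q^-1] times [q], with [q] the sigma-free prefix
   read so far, splits [w] as an element of [HL_n] times [phiHT w]. *)
Lemma HL_phiHT_decomp w : wf n w -> exists z, HL n psi z /\ eqv n w (z ++ phiHT w).
Proof.
  induction w as [|a w IH] using rev_ind; intros Hw.
  { exists []. split; [split; [apply TVH_nil | apply psi_nil] | reflexivity]. }
  apply wf_app_inv in Hw as [Hw Ha]. destruct (IH Hw) as [z [Hz E]].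
  rewrite phiHT_app. inversion Ha as [|? ? Ha0]; subst.
  destruct (is_sigma a) eqn:Es.
  - destruct a as [[i|i|i] b]; simpl in Es, Ha0; try discriminate.
    set (q := phiHT w).
    exists (z ++ (q ++ [(Sg i, b)] ++ inv q)).
    split; [apply HL_app, HL_sigma_conj; auto; [apply wf_phiHT, Hw | apply sigma_free_phiHT]|].
    rewrite E. change (phiHT [(Sg i, b)]) with (@nil letter).
    rewrite app_nil_r, <- !app_assoc. apply eqv_app_l, eqv_app_l. simpl.
    rewrite app_inv_l. reflexivity.
  - exists z. split; [exact Hz|].
    transitivity ((z ++ phiHT w) ++ [a]); [apply eqv_app_r, E|].
    unfold phiHT at 2. simpl. rewrite Es, app_assoc. reflexivity.
Qed.

Lemma HT_sub_HL w : HT n w -> HL n psi w.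
Proof.
  intro HTw. pose proof (HT_TVH w HTw) as Tw. destruct HTw as [Hw E].
  pose proof (TVH_phiHT w Tw) as Tq.
  destruct (HL_phiHT_decomp w Hw) as [z [[Tz Ez] Ew]].
  split; [exact Tw|].
  rewrite (psi_eqv _ _ Tw (TVH_app _ _ Tz Tq) Ew), psi_app, Ez by assumption.
  rewrite (psi_eqv _ _ Tq TVH_nil E). apply psi_nil.
Qed.

Lemma HL_sub_HT v : HL n psi v -> HT n v.
Proof.
  intros [Tv Ev]. split; [apply Tv|].
  pose proof (TVH_phiHT v Tv) as Tq.
  destruct (HL_phiHT_decomp v (proj1 Tv)) as [z [[Tz Ez] Ev']].
  assert (Eq : eqv n (psi (phiHT v)) []).
  { rewrite <- Ev, (psi_eqv _ _ Tv (TVH_app _ _ Tz Tq) Ev'), psi_app, Ez by assumption.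
    reflexivity. }
  destruct (sigma_free_trivial_perm (phiHT v) (proj1 Tq) (sigma_free_phiHT v) (proj2 Tq))
    as [l [Hl El]].
  rewrite (psi_eqv _ _ Tq (TVH_gammas l Hl) El), psi_gammas in Eq by exact Hl.
  rewrite El. exact Eq.
Qed.

End Kernel.

End Presentation.

Theorem mainTheorem19 (n : nat) (hn : 2 <= n) :
  (exists psi, is_psiH n psi) /\
  (forall psi, is_psiH n psi -> subgroup_iso n (HT n) (HL n psi)).
Proof.
  split; [exists phiHT; apply phiHT_is_psiH|].
  intros psi Hpsi. exists (fun w => w).
  split; [|split; [|split; [|split]]].
  - intros w Hw. exact (HT_sub_HL n psi Hpsi w Hw).
  - intros w w' _ _ E. exact E.
  - intros. reflexivity.
  - intros w w' _ _ E. exact E.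
  - intros v Hv. exists v. split; [exact (HL_sub_HT n psi Hpsi v Hv) | reflexivity].
Qed.
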